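(* The MPB rule $M$ satisfies maximal coverage: for every PB instance $I$, every $S\in M(I)$, every $p\in S$ such that $\{j\in N: p\in A_j\}\subseteq\{j\in N:(S\setminus\{p\})\cap A_j\ne\emptyset\}$, and every voter $i\in N$, if $W_M(I)\cap A_i=\emptyset$ then $c(a)>b-c(S\setminus\{p\})$ for all $a\in A_i$.
   Context: A PB instance is $I=\langle N,P,c,b,\mathcal{A}\rangle$ with voters $N=\{1,\dots,n\}$, projects $P$, costs $c:P\to\mathbb{N}$, budget $b\in\mathbb{N}$, and approval sets $A_i\subseteq P$. $c(S)=\sum_{p\in S}c(p)$; $S$ is feasible if $c(S)\le b$; $u_i(S)=c(S\cap A_i)$. The MPB rule $M$ outputs $M(I)$, the set of all feasible $S$ maximizing $\min_{i\in N}u_i(S)$ among feasible sets. $W_M(I)=\{p\in P:\exists S\in M(I),\ p\in S\}$. *)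

From mathcomp Require Import all_boot.
Set Implicit Arguments. Unset Strict Implicit. Unset Printing Implicit Defensive.

Section PB.
Variables (N P : finType) (c : P -> nat) (b : nat) (A : N -> {set P}).

Definition cost (S : {set P}) : nat := \sum_(p in S) c p.

Definition feasible (S : {set P}) : bool := cost S <= b.

Definition util (i : N) (S : {set P}) : nat := cost (S :&: A i).

(* min_{i in N} u_i(S); the neutral element cost setT is an upper bound of
   every utility, so it plays the role of +infinity (relevant only if N is empty). *)
Definition minutil (S : {set P}) : nat := \big[minn/cost setT]_(i : N) util i S.

Definition MPB (S : {set P}) : Prop :=
  feasible S /\ forall T : {set P}, feasible T -> minutil T <= minutil S.

Definition winners (p : P) : Prop := exists2 S, MPB S & p \in S.

End PB.

(* If some voter i approves no winning project, then every optimal S has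
   S ∩ A_i = ∅, so the optimal egalitarian welfare is at most u_i(S) = 0.
   Then every feasible set is optimal, in particular {a} whenever c(a) <= b;
   as a ∈ A_i cannot win, every project approved by i costs more than the
   whole budget b, let alone b - c(S \ {p}). *)
From HB Require Import structures.
From mathcomp Require Import all_boot.

Set Implicit Arguments. Unset Strict Implicit. Unset Printing Implicit Defensive.

HB.instance Definition _ := SemiGroup.isComLaw.Build nat minn minnA minnC.

Section MaximinPB.
Variables (N P : finType) (c : P -> nat) (b : nat) (A : N -> {set P}).

Lemma minutil_le_util (i : N) (S : {set P}) : minutil c A S <= util c A i S.
Proof. by rewrite /minutil (bigD1 i) //= geq_minl. Qed.

Lemma feasible_set1 (a : P) : feasible c b [set a] = (c a <= b).
Proof. by rewrite /feasible /cost big_set1. Qed.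

Lemma MPB_minutil_eq0 (S : {set P}) (i : N) :
  MPB c b A S -> (forall a, winners c b A a -> a \notin A i) ->
  minutil c A S = 0.
Proof.
move=> optS unserved_i.
have disjSAi : S :&: A i = set0.
  apply/setP => x; rewrite !inE; apply/andP => -[xS xAi].
  by have /negP := unserved_i x (ex_intro2 _ _ S optS xS).
apply/eqP; rewrite -leqn0 (leq_trans (minutil_le_util i S)) //.
by rewrite /util disjSAi /cost big_set0.
Qed.

Lemma MPB_of_minutil_eq0 (S T : {set P}) :
  MPB c b A S -> minutil c A S = 0 -> feasible c b T -> MPB c b A T.
Proof.
move=> [_ optS] minS0 feasT; split=> // U feasU.
by rewrite (leq_trans (optS U feasU)) // minS0.
Qed.

Lemma unserved_voter_costly (S : {set P}) (i : N) (a : P) :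
  MPB c b A S -> (forall a, winners c b A a -> a \notin A i) ->
  a \in A i -> b < c a.
Proof.
move=> optS unserved_i aAi; rewrite ltnNge -feasible_set1; apply/negP => feas_a.
have opt_a := MPB_of_minutil_eq0 optS (MPB_minutil_eq0 optS unserved_i) feas_a.
by have /negP := unserved_i a (ex_intro2 _ _ _ opt_a (set11 a)).
Qed.

End MaximinPB.

Theorem proposition4 (N P : finType) (c : P -> nat) (b : nat) (A : N -> {set P})
  (S : {set P}) (p : P) :
  MPB c b A S -> p \in S ->
  (forall j : N, p \in A j -> (S :\ p) :&: A j != set0) ->
  forall i : N,
    (forall a : P, winners c b A a -> a \notin A i) ->
    forall a : P, a \in A i -> b - cost c (S :\ p) < c a.
Proof.
move=> optS _ _ i unserved_i a aAi.
exact: leq_ltn_trans (leq_subr _ _) (unserved_voter_costly optS unserved_i aAi).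
Qed.
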